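(* Let $\{g_k\}_{k\ge1}\subset\mathbb{R}^{+}\cup\{0\}$ and for $n=1,2,\dots$ define $\Gamma_{(n)}:\mathcal{O}\to\mathcal{O}$ by $$\Gamma_{(n)}\varphi(x)=\frac{\varphi(x)\exp\!\left(x\sum_{k=1}^{n}g_k\right)}{\sum_{y\in E_\varphi}\varphi(y)\exp\!\left(y\sum_{k=1}^{n}g_k\right)},\qquad x\in\mathbb{R}.$$ Then for any NFD $\varphi\in\mathcal{O}$ with $E_\varphi\subset[0,\infty)$ and any positive integers $n>m$, $$d\big(\Gamma_{(n)}\varphi,\Gamma_{(m)}\varphi\big)\le\sum_{x\in E_\varphi}\left(\exp\!\left(x\sum_{k=m+1}^{n}g_k\right)-1\right).$$
   Context: A normalized fitness distribution (NFD) is a function $\varphi:\mathbb{R}\to[0,1]$ whose support $E_\varphi=\{x:\varphi(x)\neq0\}$ is finite and which satisfies $\sum_{x\in E_\varphi}\varphi(x)=1$; $\mathcal{O}$ denotes the space of all NFDs. The metric $d$ on $\mathcal{O}$ is $d(\varphi_1,\varphi_2)=\sum_{x\in E_{\varphi_1}\cup E_{\varphi_2}}|\varphi_1(x)-\varphi_2(x)|$. In the paper, NFDs arise from populations with a fitness function $f:\Omega\to\mathbb{R}^{+}\cup\{0\}$, so fitness values are nonnegative. *)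

From HB Require Import structures.
From mathcomp Require Import all_boot all_order all_algebra.
From mathcomp Require Import all_classical all_reals all_analysis.
Set Implicit Arguments. Unset Strict Implicit. Unset Printing Implicit Defensive.
Import Order.TTheory GRing.Theory Num.Theory.
Local Open Scope classical_set_scope.
Local Open Scope ring_scope.

Definition supp (R : realType) (phi : R -> R) : set R := [set x | phi x != 0].

Definition is_NFD (R : realType) (phi : R -> R) : Prop :=
  (forall x, 0 <= phi x <= 1) /\ finite_set (supp phi) /\
  \sum_(x \in supp phi) phi x = 1.

Definition dist (R : realType) (phi1 phi2 : R -> R) : R :=
  \sum_(x \in supp phi1 `|` supp phi2) `|phi1 x - phi2 x|.

Definition cumg (R : realType) (g : nat -> R) (n : nat) : R :=
  \sum_(1 <= k < n.+1) g k.

Definition Gamma (R : realType) (g : nat -> R) (n : nat) (phi : R -> R) : R -> R :=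
  fun x => phi x * expR (x * cumg g n) /
           \sum_(y \in supp phi) phi y * expR (y * cumg g n).

From HB Require Import structures.
From mathcomp Require Import all_boot all_order all_algebra.
From mathcomp Require Import all_classical all_reals all_analysis.
From mathcomp Require Import ring lra.
Set Implicit Arguments. Unset Strict Implicit. Unset Printing Implicit Defensive.

(* Gamma_(n) phi is Gamma_(m) phi reweighted by r x = exp (x * sum_(m < k <= n) g k) >= 1
   and renormalised, because reweightings compose multiplicatively.  For a probability
   vector q and weights r >= 1 put u = sum_y q y (r y - 1); the reweighted vector differs
   from q at x by q x (r x - 1 - u) / (1 + u).  Since q x (r x - 1) <= u, the absolute
   value of this is at most (1 - 2 q x) q x (r x - 1) + q x u, and summing over x bounds
   the l1 distance by sum_x 2 q x (1 - q x) (r x - 1) <= sum_x (r x - 1). *)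
Import Order.TTheory GRing.Theory Num.Theory.
Local Open Scope classical_set_scope.
Local Open Scope ring_scope.

Lemma ler_sum_mem (R : numDomainType) (T : eqType) (s : seq T) (F : T -> R) x :
  x \in s -> (forall y, y \in s -> 0 <= F y) -> F x <= \sum_(y <- s) F y.
Proof.
move=> xs F_ge0; rewrite (perm_big _ (perm_to_rem xs)) big_cons lerDl.
by rewrite big_seq_cond; apply: sumr_ge0 => y /andP[/mem_rem /F_ge0].
Qed.

Lemma ler_norm_reweight_term (R : realFieldType) (q a u : R) :
  0 <= q <= 1 -> 0 <= a -> q * a <= u ->
  `|q * (a - u) / (1 + u)| <= (1 - 2 * q) * (q * a) + q * u.
Proof.
move=> /andP[q_ge0 q_le1] a_ge0 qa_le_u.
have u_ge0 : 0 <= u by apply: le_trans qa_le_u; rewrite mulr_ge0.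
have qqa_le_qu : q * (q * a) <= q * u by rewrite ler_wpM2l.
have qa1q_ge0 : 0 <= q * a * (1 - q) by rewrite !mulr_ge0 // subr_ge0.
have bound_ge0 : 0 <= (1 - 2 * q) * (q * a) + q * u by nra.
have bound_u_ge0 : 0 <= ((1 - 2 * q) * (q * a) + q * u) * u by rewrite mulr_ge0.
by rewrite ler_norml !ler_pdivrMr ?ler_pdivlMr ?ltr_wpDr //; apply/andP; split; nra.
Qed.

Section Reweighting.
Variables (R : realFieldType) (T : eqType) (s : seq T) (q f : T -> R).
Hypotheses (q_ge0 : forall x, x \in s -> 0 <= q x) (q_sum1 : \sum_(x <- s) q x = 1).
Hypothesis f_ge1 : forall x, x \in s -> 1 <= f x.

Lemma l1_reweight_le :
  \sum_(x <- s) `|q x * f x / \sum_(y <- s) q y * f y - q x|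
    <= \sum_(x <- s) (f x - 1).
Proof.
set u := \sum_(y <- s) q y * (f y - 1).
have normE : \sum_(y <- s) q y * f y = 1 + u.
  rewrite -q_sum1 -big_split /=; apply: eq_bigr => y _; ring.
have qa_ge0 y : y \in s -> 0 <= q y * (f y - 1).
  by move=> ys; rewrite mulr_ge0 ?q_ge0 // subr_ge0 f_ge1.
have u_ge0 : 0 <= u by rewrite /u big_seq; apply: sumr_ge0 => y; apply: qa_ge0.
have q_le1 x : x \in s -> q x <= 1 by move=> xs; rewrite -q_sum1 ler_sum_mem.
rewrite normE.
apply: (@le_trans _ _ (\sum_(x <- s) ((1 - 2 * q x) * (q x * (f x - 1)) + q x * u))).
  rewrite big_seq [leRHS]big_seq; apply: ler_sum => x xs.
  have -> : q x * f x / (1 + u) - q x = q x * ((f x - 1) - u) / (1 + u).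
    by field; rewrite gt_eqF // ltr_wpDr.
  apply: ler_norm_reweight_term; rewrite ?q_ge0 ?q_le1 ?subr_ge0 ?f_ge1 //.
  by apply: (ler_sum_mem (F := fun y => q y * (f y - 1))).
rewrite big_split /= -mulr_suml q_sum1 mul1r -big_split /= big_seq [leRHS]big_seq.
apply: ler_sum => x xs.
have fx_ge1 := f_ge1 xs.
(* 1 - 2 q (1 - q) = ((1 - 2 q) ^ 2 + 1) / 2 *)
have : 0 <= (f x - 1) * ((1 - 2 * q x) ^+ 2 + 1).
  by apply: mulr_ge0; [rewrite subr_ge0 | rewrite addr_ge0 ?sqr_ge0].
nra.
Qed.

End Reweighting.

Definition reweight (R : realType) (phi f : R -> R) : R -> R :=
  fun x => phi x * f x / \sum_(y \in supp phi) phi y * f y.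

Section NFDReweight.
Variables (R : realType) (phi : R -> R).
Hypothesis phi_NFD : is_NFD phi.

Let phi_ge0 x : 0 <= phi x.
Proof. by case: phi_NFD => /(_ x)/andP[]. Qed.

Let supp_fin : finite_set (supp phi).
Proof. by case: phi_NFD => _ []. Qed.

Let s : seq R := finmap.enum_fset (fset_set (supp phi)).

Let mem_s x : (x \in s) = (phi x != 0).
Proof. by rewrite in_fset_set //; apply/idP/idP; rewrite in_setE. Qed.

Let fsum_supp (F : R -> R) : \sum_(x \in supp phi) F x = \sum_(x <- s) F x.
Proof. exact: fsbig_finite. Qed.

Let phi_sum1 : \sum_(x <- s) phi x = 1.
Proof. by case: phi_NFD => _ [_]; rewrite fsum_supp. Qed.

Section Weight.
Variable f : R -> R.
Hypothesis f_gt0 : forall x, supp phi x -> 0 < f x.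

Let weight_ge0 x : x \in s -> 0 <= phi x * f x.
Proof. by rewrite mem_s => /f_gt0/ltW; apply: mulr_ge0. Qed.

Lemma reweight_norm_gt0 : 0 < \sum_(y \in supp phi) phi y * f y.
Proof.
have [y supp_y phi_y_gt0] : exists2 y, supp phi y & 0 < phi y.
  by apply: (fsumr_gt0 [::]); case: phi_NFD => _ [_ ->].
rewrite fsum_supp; apply: lt_le_trans (_ : phi y * f y <= _).
  by rewrite mulr_gt0 ?f_gt0.
by apply: (ler_sum_mem (F := fun y => phi y * f y)); rewrite ?mem_s.
Qed.

Lemma supp_reweight : supp (reweight phi f) = supp phi.
Proof.
apply/seteqP; split=> x; rewrite /supp /reweight /= mulf_eq0 invr_eq0.
  by rewrite (gt_eqF reweight_norm_gt0) orbF mulf_eq0 negb_or => /andP[].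
by move=> phi_x; rewrite (gt_eqF reweight_norm_gt0) orbF mulf_neq0 // gt_eqF // f_gt0.
Qed.

Lemma reweight_NFD : is_NFD (reweight phi f).
Proof.
have norm_neq0 := gt_eqF reweight_norm_gt0.
split; last split.
- move=> x; have [phi_x0|phi_x] := eqVneq (phi x) 0.
    by rewrite /reweight phi_x0 !mul0r lexx ler01.
  have xs : x \in s by rewrite mem_s.
  rewrite /reweight divr_ge0 ?weight_ge0 ?(ltW reweight_norm_gt0) //=.
  rewrite ler_pdivrMr ?reweight_norm_gt0 // mul1r fsum_supp.
  exact: (ler_sum_mem (F := fun y => phi y * f y)).
- by rewrite supp_reweight.
- by rewrite supp_reweight /reweight -mulr_fsuml divff ?norm_neq0.
Qed.

End Weight.

Lemma reweightM (f h : R -> R) :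
  (forall x, supp phi x -> 0 < f x) -> (forall x, supp phi x -> 0 < h x) ->
  reweight (reweight phi f) h = reweight phi (fun x => f x * h x).
Proof.
move=> f_gt0 h_gt0.
have fh_gt0 x : supp phi x -> 0 < f x * h x.
  by move=> supp_x; rewrite mulr_gt0 ?f_gt0 ?h_gt0.
have normf_neq0 := gt_eqF (reweight_norm_gt0 f_gt0).
have normfh_neq0 := gt_eqF (reweight_norm_gt0 fh_gt0).
apply/funext=> x; rewrite {1}/reweight (supp_reweight f_gt0) /reweight.
set Zf := \sum_(y \in supp phi) phi y * f y.
have -> : \sum_(y \in supp phi) phi y * f y / Zf * h y =
          (\sum_(y \in supp phi) phi y * (f y * h y)) / Zf.
  by rewrite mulr_fsuml; apply: eq_fsbigr => y _; ring.
by field; rewrite normf_neq0 normfh_neq0.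
Qed.

Lemma dist_reweight_le (f : R -> R) : (forall x, supp phi x -> 1 <= f x) ->
  dist (reweight phi f) phi <= \sum_(x \in supp phi) (f x - 1).
Proof.
move=> f_ge1.
have f_gt0 x : supp phi x -> 0 < f x by move/f_ge1; apply: lt_le_trans ltr01.
rewrite /dist (supp_reweight f_gt0) setUid /reweight !fsum_supp.
apply: l1_reweight_le => [x _ | | x]; [exact: phi_ge0 | exact: phi_sum1 |].
by rewrite mem_s => /f_ge1.
Qed.

End NFDReweight.

Theorem lemma2 (R : realType) (g : nat -> R)
  (hg : forall k : nat, (1 <= k)%N -> 0 <= g k)
  (phi : R -> R) (hphi : is_NFD phi)
  (hsupp : supp phi `<=` [set x : R | 0 <= x])
  (n m : nat) (hm : (0 < m)%N) (hmn : (m < n)%N) :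
  dist (Gamma g n phi) (Gamma g m phi) <=
  \sum_(x \in supp phi) (expR (x * \sum_(m.+1 <= k < n.+1) g k) - 1).
Proof.
set c := \sum_(m.+1 <= k < n.+1) g k.
have c_ge0 : 0 <= c.
  rewrite /c big_nat; apply: sumr_ge0 => k /andP[lt_mk _].
  exact/hg/(leq_trans hm)/ltnW.
have cumgD : cumg g n = cumg g m + c.
  by rewrite /cumg (@big_cat_nat _ _ _ m.+1) // ltnW.
have GammaE k : Gamma g k phi = reweight phi (fun x => expR (x * cumg g k)) by [].
have expR_pos (t : R) x : supp phi x -> 0 < expR (x * t) by rewrite expR_gt0.
have GammaS : Gamma g n phi = reweight (Gamma g m phi) (fun x => expR (x * c)).
  rewrite !GammaE (reweightM hphi (expR_pos _) (expR_pos _)).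
  congr (reweight phi _); apply/funext => x.
  by rewrite cumgD mulrDr expRD.
have Gamma_NFD : is_NFD (Gamma g m phi) := reweight_NFD hphi (expR_pos _).
have supp_Gamma : supp (Gamma g m phi) = supp phi := supp_reweight hphi (expR_pos _).
rewrite GammaS -supp_Gamma; apply: dist_reweight_le => // x.
rewrite supp_Gamma => /hsupp x_ge0.
by apply: le_trans (expR_ge1Dx _); rewrite lerDl mulr_ge0.
Qed.
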